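(* Let $f=\frac1n\sum_{i=1}^n f_i$ where each $f_i:\mathbb{R}^d\to\mathbb{R}$ is convex, differentiable and $L$-smooth, let $X\subset\mathbb{R}^d$ be compact convex, and assume there is $x^\star\in X$ with $f(x^\star)=\min_{\mathbb{R}^d}f=\min_X f$. Let $T\ge1$ and let $(x^{(t)})_{1\le t\le T}$ and $(g^{(t)})$ be generated by the AdaLVR algorithm (described in the context, with either AdaGrad variant and either gradient estimator type, and $p=1/n$ in the L-SVRG case). Then $$\mathbb{E}\Big[\sum_{t=1}^T\mathbb{E}_t\big[\|g^{(t)}\|^2\big]\Big]\le \mathbb{E}\Big[8L\sum_{t=1}^T\big(f(x^{(t)})-f(x^\star)\big)\Big]+4Ln\big(f(x^{(1)})-f(x^\star)\big).$$
   Context: AdaLVR algorithm with inputs $x^{(1)}\in\mathbb{R}^d$, $\eta>0$, $p\in(0,1)$: set $G_0=0$; for SAGA set $\tilde x_i^{(0)}=x^{(1)}$ ($1\le i\le n$), for L-SVRG set $\tilde x^{(0)}=x^{(1)}$. For $t=1,2,\dots$: sample $i(t)$ uniformly from $\{1,\dots,n\}$ independently of the past; compute (SAGA) $g^{(t)}=\nabla f_{i(t)}(x^{(t)})-\nabla f_{i(t)}(\tilde x^{(t-1)}_{i(t)})+\frac1n\sum_{i}\nabla f_i(\tilde x_i^{(t-1)})$ and set $\tilde x_{i}^{(t)}=x^{(t)}$ if $i=i(t)$, else $\tilde x_i^{(t)}=\tilde x_i^{(t-1)}$; or (L-SVRG) $g^{(t)}=\nabla f_{i(t)}(x^{(t)})-\nabla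 f_{i(t)}(\tilde x^{(t-1)})+\nabla f(\tilde x^{(t-1)})$, sample $Z^{(t)}\sim\mathrm{Bernoulli}(p)$ independently and set $\tilde x^{(t)}=x^{(t)}$ if $Z^{(t)}=1$, else $\tilde x^{(t)}=\tilde x^{(t-1)}$. Set $G_t=G_{t-1}+\|g^{(t)}\|^2$ (Norm) or $G_t=G_{t-1}+\operatorname{diag}(g^{(t)}g^{(t)\top})$ (Diagonal, off-diagonal entries zeroed), $A_t=G_t^{1/2}$, and $x^{(t+1)}\in\arg\min_{y\in X}\|y-(x^{(t)}-\eta A_t^{-1}g^{(t)})\|_{A_t}$, with $A_t^{-1}$ the Moore–Penrose pseudo-inverse and $\|v\|_A=\langle v,Av\rangle^{1/2}$. $\mathbb{E}_t$ denotes conditional expectation given the history up to the computation of $x^{(t)}$ (i.e. integrating over $i(t)$ and $Z^{(t)}$). *)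

From HB Require Import structures.
From mathcomp Require Import all_boot all_order all_algebra.
From mathcomp Require Import all_classical all_reals all_analysis.

Set Implicit Arguments.
Unset Strict Implicit.
Unset Printing Implicit Defensive.

Import Order.TTheory GRing.Theory Num.Theory.
Import numFieldNormedType.Exports.
Local Open Scope classical_set_scope.
Local Open Scope ring_scope.

Inductive estimator := SAGA | LSVRG.
Inductive adagrad_variant := NormVar | DiagVar.

Section AdaLVR.
Variables (R : realType) (d n : nat).
Local Notation vec := 'rV[R]_d.

Definition dotp (u v : vec) : R := \sum_(k < d) u ord0 k * v ord0 k.
Definition sqnorm (v : vec) : R := \sum_(k < d) v ord0 k ^+ 2.
Definition enorm (v : vec) : R := Num.sqrt (sqnorm v).

(** ||v||_A = <v, A v>^(1/2) for the diagonal matrix A = diag(a). *)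
Definition anorm (a v : vec) : R :=
  Num.sqrt (\sum_(k < d) a ord0 k * v ord0 k ^+ 2).

Definition convex_fun (g : vec -> R) : Prop :=
  forall x y (t : R), 0 <= t <= 1 ->
    g (t *: x + (1 - t) *: y) <= t * g x + (1 - t) * g y.

Definition favg (f : 'I_n -> vec -> R) (x : vec) : R :=
  n%:R^-1 * \sum_(i < n) f i x.
Definition gavg (grad : 'I_n -> vec -> vec) (x : vec) : vec :=
  n%:R^-1 *: \sum_(i < n) grad i x.

Definition is_proj_sel (X : set vec) (proj : vec -> vec -> vec) : Prop :=
  forall a y : vec, (forall k, 0 <= a ord0 k) ->
    X (proj a y) /\ forall z, X z -> anorm a (proj a y - y) <= anorm a (z - y).

(** Algorithm state: x^(t), diagonal of G_{t-1} (for the Norm variant all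
    entries are equal to the scalar G_{t-1}), SAGA table (tilde x_i),
    L-SVRG snapshot (tilde x). *)
Record state := State {
  st_x : vec; st_G : vec; st_tab : 'I_n -> vec; st_snap : vec }.

(** Random choice made at one iteration: i(t) for SAGA, (i(t), Z(t)) for L-SVRG. *)
Definition choiceT (k : estimator) : finType :=
  match k with SAGA => ('I_n : finType) | LSVRG => (('I_n * bool)%type : finType) end.

Definition weight (k : estimator) (p : R) : choiceT k -> R :=
  match k return choiceT k -> R with
  | SAGA => fun _ => n%:R^-1
  | LSVRG => fun c => n%:R^-1 * (if c.2 then p else 1 - p)
  end.

Definition gest (grad : 'I_n -> vec -> vec) (k : estimator) (s : state)
  : choiceT k -> vec :=
  match k return choiceT k -> vec with
  | SAGA => fun i => grad i (st_x s) - grad i (st_tab s i)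
                     + n%:R^-1 *: \sum_(j < n) grad j (st_tab s j)
  | LSVRG => fun c => grad c.1 (st_x s) - grad c.1 (st_snap s) + gavg grad (st_snap s)
  end.

Definition new_tab (k : estimator) (s : state) : choiceT k -> 'I_n -> vec :=
  match k return choiceT k -> 'I_n -> vec with
  | SAGA => fun i j => if j == i then st_x s else st_tab s j
  | LSVRG => fun _ => st_tab s
  end.

Definition new_snap (k : estimator) (s : state) : choiceT k -> vec :=
  match k return choiceT k -> vec with
  | SAGA => fun _ => st_snap s
  | LSVRG => fun c => if c.2 then st_x s else st_snap s
  end.

Definition step (grad : 'I_n -> vec -> vec) (ada : adagrad_variant) (eta : R)
  (proj : vec -> vec -> vec) (k : estimator) (s : state) (c : choiceT k) : state :=
  let g := gest grad s c in
  let G' := match ada with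
            | NormVar => st_G s + const_mx (sqnorm g)
            | DiagVar => st_G s + map_mx (fun a => a ^+ 2) g
            end in
  let A := map_mx Num.sqrt G' in
  (* A^{-1} g with the Moore-Penrose pseudo-inverse of the diagonal A
     (in MathComp 0^-1 = 0) *)
  let y := st_x s - eta *: (\row_(j < d) (g ord0 j / A ord0 j)) in
  State (proj A y) G' (new_tab s c) (new_snap s c).

Definition init_state (x1 : vec) : state := State x1 0 (fun _ => x1) x1.

(** State after the choices [w] (the state holding x^(size w + 1)). *)
Definition run grad ada eta proj k (x1 : vec) (w : seq (choiceT k)) : state :=
  foldl (@step grad ada eta proj k) (init_state x1) w.

Definition Exp (k : estimator) (p : R) (T : nat) (F : T.-tuple (choiceT k) -> R) : R :=
  \sum_(w : T.-tuple (choiceT k)) (\prod_(t < T) weight p (tnth w t)) * F w.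

(** E_t[ ||g^(t)||^2 ] given the history (the state holding x^(t)). *)
Definition cond_sqnorm grad k (p : R) (s : state) : R :=
  \sum_(c : choiceT k) weight p c * sqnorm (gest grad s c).

End AdaLVR.

(* Each f_i is convex and L-smooth, hence co-coercive, and the gradient of f
   vanishes at the minimiser xs; averaging gives
     A(x) := (1/n) sum_i |grad f_i(x) - grad f_i(xs)|^2 <= 2L (f(x) - f(xs)).
   The estimator g_t is a control variate built on anchors z_i (the SAGA table,
   or the L-SVRG snapshot), and with D_t := (1/n) sum_i |grad f_i(z_i) - grad f_i(xs)|^2
   the variance bound reads E_t |g_t|^2 <= 2 A(x_t) + 2 D_t.  With p = 1/n the
   anchors are refreshed at rate 1/n, E_t D_{t+1} = A(x_t)/n + (1 - 1/n) D_t,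
   so V := 2n D is a Lyapunov function:
     E_t |g_t|^2 + E_t V_{t+1} <= 8L (f(x_t) - f(xs)) + V_t.
   Summing and telescoping the expectations leaves V_1 = 2n A(x_1), which is
   at most 4Ln (f(x_1) - f(xs)). *)

From HB Require Import structures.
From mathcomp Require Import all_boot all_order all_algebra.
From mathcomp Require Import all_classical all_reals all_analysis.
From mathcomp Require Import ring lra.
Import Order.TTheory GRing.Theory Num.Theory.
Import numFieldNormedType.Exports.
Local Open Scope classical_set_scope.
Local Open Scope ring_scope.

Set Implicit Arguments.
Unset Strict Implicit.
Unset Printing Implicit Defensive.

Section Euclidean.
Variables (R : realType) (d : nat).
Local Notation vec := 'rV[R]_d.
Implicit Types (u v w : vec) (s : R).

Lemma dotpDl u v w : dotp (u + v) w = dotp u w + dotp v w.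
Proof. by rewrite /dotp -big_split; apply: eq_bigr => k _; rewrite mxE mulrDl. Qed.

Lemma dotpDr u v w : dotp u (v + w) = dotp u v + dotp u w.
Proof. by rewrite /dotp -big_split; apply: eq_bigr => k _; rewrite mxE mulrDr. Qed.

Lemma dotpZl s u v : dotp (s *: u) v = s * dotp u v.
Proof. by rewrite /dotp mulr_sumr; apply: eq_bigr => k _; rewrite mxE mulrA. Qed.

Lemma dotpZr s u v : dotp u (s *: v) = s * dotp u v.
Proof. by rewrite /dotp mulr_sumr; apply: eq_bigr => k _; rewrite mxE mulrCA. Qed.

Lemma dotpNl u v : dotp (- u) v = - dotp u v.
Proof. by rewrite -scaleN1r dotpZl mulN1r. Qed.

Lemma dotpNr u v : dotp u (- v) = - dotp u v.
Proof. by rewrite -scaleN1r dotpZr mulN1r. Qed.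

Lemma dotpBl u v w : dotp (u - v) w = dotp u w - dotp v w.
Proof. by rewrite dotpDl dotpNl. Qed.

Lemma dotpBr u v w : dotp u (v - w) = dotp u v - dotp u w.
Proof. by rewrite dotpDr dotpNr. Qed.

Lemma dotp0l v : dotp 0 v = 0.
Proof. by rewrite /dotp big1 // => k _; rewrite mxE mul0r. Qed.

Lemma dotp_suml m (F : 'I_m -> vec) v : dotp (\sum_i F i) v = \sum_i dotp (F i) v.
Proof. by elim/big_rec2: _ => [|i y1 y2 _ <-]; rewrite ?dotp0l ?dotpDl. Qed.

Lemma dotpvv u : dotp u u = sqnorm u.
Proof. by apply: eq_bigr => k _; rewrite expr2. Qed.

Lemma sqnorm_ge0 u : 0 <= sqnorm u.
Proof. by apply: sumr_ge0 => k _; rewrite sqr_ge0. Qed.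

Lemma sqnormZ s u : sqnorm (s *: u) = s ^+ 2 * sqnorm u.
Proof. by rewrite /sqnorm mulr_sumr; apply: eq_bigr => k _; rewrite mxE exprMn. Qed.

Lemma sqnormN u : sqnorm (- u) = sqnorm u.
Proof. by rewrite -scaleN1r sqnormZ sqrrN expr1n mul1r. Qed.

Lemma sqnormD_le u v : sqnorm (u + v) <= 2 * sqnorm u + 2 * sqnorm v.
Proof.
rewrite /sqnorm !mulr_sumr -big_split /=; apply: ler_sum => k _; rewrite mxE.
by have := sqr_ge0 (u ord0 k - v ord0 k); nra.
Qed.

Lemma sqnorm_eq0 u : (sqnorm u == 0) = (u == 0).
Proof.
apply/idP/eqP => [|->]; last by rewrite /sqnorm big1 // => k _; rewrite mxE expr0n.
rewrite psumr_eq0 => [/allP u0|k _]; last exact: sqr_ge0.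
apply/rowP => k; rewrite mxE.
by have /implyP/(_ isT) := u0 k (mem_index_enum _); rewrite sqrf_eq0 => /eqP.
Qed.

Lemma sqr_enorm u : enorm u ^+ 2 = sqnorm u.
Proof. by rewrite sqr_sqrtr // sqnorm_ge0. Qed.

Lemma enormZ s u : 0 <= s -> enorm (s *: u) = s * enorm u.
Proof. by move=> s0; rewrite /enorm sqnormZ sqrtrM ?sqr_ge0 // sqrtr_sqr ger0_norm. Qed.

Lemma enormN u : enorm (- u) = enorm u.
Proof. by rewrite /enorm sqnormN. Qed.

Lemma dotp_young u v (c : R) : 0 < c ->
  dotp u v <= (sqnorm u / c + c * sqnorm v) / 2.
Proof.
move=> c0; rewrite /dotp /sqnorm mulr_suml mulr_sumr -big_split /= mulr_suml.
apply: ler_sum => k _; set a := u ord0 k; set b := v ord0 k.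
have -> : a ^+ 2 / c = (a / c) ^+ 2 * c by field; rewrite gt_eqF.
have -> : a * b = (a / c) * b * c by field; rewrite gt_eqF.
have : 0 <= c * (a / c - b) ^+ 2 by rewrite mulr_ge0 ?sqr_ge0 ?ltW.
nra.
Qed.

Lemma dotp_le_enorm u v (c : R) : 0 < c -> enorm u <= c * enorm v ->
  dotp u v <= c * sqnorm v.
Proof.
move=> c0 uv; apply: (le_trans (dotp_young u v c0)).
suff : sqnorm u / c <= c * sqnorm v by lra.
rewrite ler_pdivrMr // mulrAC -expr2 -!sqr_enorm -exprMn lerXn2r ?nnegrE ?sqrtr_ge0 //.
by rewrite mulr_ge0 ?sqrtr_ge0 ?ltW.
Qed.

End Euclidean.

Section RealLine.
Variable R : realType.

Lemma taylor_remainder_le (g g' : R -> R) (M : R) :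
  (forall t : R, is_derive t (1 : R) g (g' t)) ->
  (forall t, 0 < t < 1 -> g' t - g' 0 <= M * t) ->
  g 1 - g 0 - g' 0 <= M / 2.
Proof.
move=> gd g'M.
pose psi : R -> R := g - (g' 0) \*: id - (M / 2) \*: (id * id).
(* [gd] enters through the [is_derive] instance search. *)
have psi_deriv (t : R) : is_derive t (1 : R) psi (g' t - g' 0 - M / 2 * (t + t)).
  by apply: is_derive_eq; rewrite ![_%:A]mulr1.
have : psi 1 <= psi 0.
  apply: (@ler0_derive1_le_cc _ psi 0 1); rewrite ?bound_itvE //.
  - move=> t; rewrite in_itv /= => t01.
    by rewrite derive1E derive_val; have := g'M t t01; lra.
  - by apply: derivable_within_continuous => t _; have [] := psi_deriv t.
by rewrite /psi !fctE /= [_%:A]mulr1 mulr1 mulr0 !scaler0 !subr0 /GRing.scale /=; lra.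
Qed.

Lemma le0_of_le_scaled (a C : R) : 0 <= C ->
  (forall t, 0 < t <= 1 -> a <= t * C) -> a <= 0.
Proof.
move=> C0 aC; apply/ler_addgt0Pr => e e0; rewrite add0r.
have eC : 0 < e + C by lra.
apply: (le_trans (aC (e / (e + C)) _)).
  by rewrite divr_gt0 //= ler_pdivrMr // mul1r; lra.
by rewrite mulrAC ler_pdivrMr //; nra.
Qed.

End RealLine.

Section Smooth.
Variables (R : realType) (d : nat).
Local Notation vec := 'rV[R]_d.

Lemma derive_along_line (F : vec -> R) (x h : vec) (t : R) :
  derivable F (t *: h + x) h ->
  derivable (fun s : R => F (s *: h + x)) t 1 /\
  'D_1 (fun s : R => F (s *: h + x)) t = 'D_h F (t *: h + x).
Proof.
have E : (fun s : R => s^-1 *: (((fun s0 : R => F (s0 *: h + x)) \o shift t) (s *: 1)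
                                 - F (t *: h + x)))
       = (fun s => s^-1 *: ((F \o shift (t *: h + x)) (s *: h) - F (t *: h + x))).
  apply/funext => s /=; congr (_ *: (F _ - _)).
  by rewrite /shift /= scalerDl [_%:A]mulr1 addrA.
by rewrite /derivable /derive E.
Qed.

Variables (F : vec -> R) (G : vec -> vec) (L : R).
Hypothesis L_gt0 : 0 < L.
Hypothesis F_grad : forall x, differentiable F x /\ forall h, 'd F x h = dotp (G x) h.
Hypothesis G_lip : forall x y, enorm (G x - G y) <= L * enorm (x - y).

Lemma is_derive_along_line (x h : vec) (t : R) :
  is_derive t (1 : R) (fun s => F (s *: h + x)) (dotp (G (t *: h + x)) h).
Proof.
have [dF dFE] := F_grad (t *: h + x).
have [Dder DE] := @derive_along_line F x h t (diff_derivable (v := h) dF).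
by apply: DeriveDef => //; rewrite DE deriveE.
Qed.

Lemma dotp_grad_line_le (x h : vec) (t : R) : 0 < t ->
  `|dotp (G (t *: h + x) - G x) h| <= L * t * sqnorm h.
Proof.
move=> t_gt0; have Lt_gt0 : 0 < L * t by rewrite mulr_gt0.
have lip y z : enorm (y - z) = t * enorm h ->
    enorm (G y - G z) <= L * t * enorm h.
  by move=> yz; rewrite -mulrA -yz G_lip.
rewrite ler_norml lerNl -dotpNl opprB !dotp_le_enorm //; apply: lip.
  by rewrite addrK enormZ // ltW.
by rewrite opprD addrCA subrr addr0 enormN enormZ // ltW.
Qed.

Lemma smooth_upper x y : F y <= F x + dotp (G x) (y - x) + L / 2 * sqnorm (y - x).
Proof.
set h := y - x.
have incr t : 0 < t < 1 ->
    dotp (G (t *: h + x)) h - dotp (G (0 *: h + x)) h <= L * sqnorm h * t.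
  move=> /andP[t_gt0 _]; rewrite scale0r add0r -dotpBl mulrAC.
  exact: le_trans (ler_norm _) (dotp_grad_line_le x h t_gt0).
have := taylor_remainder_le (is_derive_along_line x h) incr.
by rewrite /= scale1r scale0r add0r /h subrK; lra.
Qed.

Lemma smooth_lower x y : F x + dotp (G x) (y - x) - L / 2 * sqnorm (y - x) <= F y.
Proof.
set h := y - x.
have incr t : 0 < t < 1 ->
    - dotp (G (t *: h + x)) h - - dotp (G (0 *: h + x)) h <= L * sqnorm h * t.
  move=> /andP[t_gt0 _]; rewrite scale0r add0r opprK addrC -dotpBl mulrAC.
  rewrite -opprB dotpNl; apply: le_trans (dotp_grad_line_le x h t_gt0).
  by rewrite -normrN ler_norm.
have := taylor_remainder_le (fun t => is_deriveN (is_derive_along_line x h t)) incr.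
by rewrite !fctE /= scale1r scale0r add0r /h subrK; lra.
Qed.

Hypothesis F_convex : convex_fun F.

Lemma convex_grad_le x y : F x + dotp (G x) (y - x) <= F y.
Proof.
set S := sqnorm (y - x).
suff : dotp (G x) (y - x) - (F y - F x) <= 0 by lra.
apply: (@le0_of_le_scaled _ _ (L / 2 * S)).
  by rewrite mulr_ge0 ?sqnorm_ge0 // divr_ge0 // ltW.
move=> t /andP[t_gt0 t_le1].
have t01 : 0 <= t <= 1 by rewrite ltW.
have := F_convex y x t01.
have -> : t *: y + (1 - t) *: x = t *: (y - x) + x.
  by rewrite scalerBr scalerBl scale1r addrA [RHS]addrAC.
have := smooth_lower x (t *: (y - x) + x); rewrite addrK dotpZr sqnormZ -/S.
move=> lower convex; rewrite -(ler_pM2l t_gt0); nra.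
Qed.

Lemma grad_cocoercive x z :
  sqnorm (G x - G z) <= 2 * L * (F x - F z - dotp (G z) (x - z)).
Proof.
set u := G x - G z; set y := x - L^-1 *: u.
have lower := convex_grad_le z y; have upper := smooth_upper x y.
have yz : y - z = (x - z) - L^-1 *: u by rewrite addrAC.
have yx : y - x = - (L^-1 *: u) by rewrite addrAC subrr add0r.
have uu : dotp (G x) u - dotp (G z) u = sqnorm u by rewrite -dotpBl dotpvv.
have quad : L / 2 * (L^-1 ^+ 2 * sqnorm u) = L^-1 * sqnorm u / 2.
  by field; rewrite gt_eqF.
rewrite yz dotpBr dotpZr in lower.
rewrite yx sqnormN sqnormZ quad dotpNr dotpZr in upper.
suff key : L^-1 * sqnorm u / 2 <= F x - F z - dotp (G z) (x - z).
  have -> : sqnorm u = 2 * L * (L^-1 * sqnorm u / 2) by field; rewrite gt_eqF.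
  by rewrite ler_wpM2l // mulr_ge0 // ltW.
have : L^-1 * sqnorm u = L^-1 * dotp (G x) u - L^-1 * dotp (G z) u by rewrite -uu mulrBr.
lra.
Qed.

End Smooth.

Section Stationary.
Variables (R : realType) (d : nat).
Local Notation vec := 'rV[R]_d.

Lemma descent_min_grad_eq0 (F : vec -> R) (g x : vec) (L : R) : 0 < L ->
  (forall y, F y <= F x + dotp g (y - x) + L / 2 * sqnorm (y - x)) ->
  (forall y, F x <= F y) -> g = 0.
Proof.
move=> L_gt0 upper x_min.
have := upper (x - L^-1 *: g); have := x_min (x - L^-1 *: g).
have -> : x - L^-1 *: g - x = - (L^-1 *: g) by rewrite addrAC subrr add0r.
rewrite sqnormN sqnormZ dotpNr dotpZr dotpvv.
have -> : L / 2 * (L^-1 ^+ 2 * sqnorm g) = L^-1 * sqnorm g / 2.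
  by field; rewrite gt_eqF.
move=> x_le_y y_le; have : L^-1 * sqnorm g <= 0 by lra.
rewrite pmulr_rle0 ?invr_gt0 // => g_le0.
by apply/eqP; rewrite -sqnorm_eq0 eq_le g_le0 sqnorm_ge0.
Qed.

End Stationary.

Section Variance.
Variables (R : realType) (n : nat).
Hypothesis n_gt0 : (0 < n)%N.

Lemma natr_neq0 : n%:R != 0 :> R.
Proof. by rewrite pnatr_eq0 -lt0n. Qed.

Lemma sum_sqr_centered_le (b : 'I_n -> R) :
  \sum_i (b i - n%:R^-1 * \sum_j b j) ^+ 2 <= \sum_i b i ^+ 2.
Proof.
set mu := n%:R^-1 * _.
have sum_b : \sum_j b j = n%:R * mu by rewrite mulVKf ?natr_neq0.
have -> : \sum_i (b i - mu) ^+ 2 = \sum_i b i ^+ 2 - n%:R * mu ^+ 2.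
  under eq_bigr => i _ do rewrite sqrrB.
  rewrite !big_split /= sumrN sumrMnl -mulr_suml sum_b sumr_const card_ord.
  by rewrite -mulr_natl; ring.
by rewrite gerBl mulr_ge0 ?ler0n ?sqr_ge0.
Qed.

Variable d : nat.
Local Notation vec := 'rV[R]_d.

Lemma sum_sqnorm_centered_le (b : 'I_n -> vec) :
  \sum_i sqnorm (b i - n%:R^-1 *: \sum_j b j) <= \sum_i sqnorm (b i).
Proof.
rewrite /sqnorm exchange_big [leRHS]exchange_big; apply: ler_sum => k _ /=.
apply: le_trans (sum_sqr_centered_le (fun i => b i ord0 k)).
by under eq_bigr => i _ do rewrite !mxE summxE.
Qed.

Lemma mean_sqnorm_control_variate_le (a b : 'I_n -> vec) :
  n%:R^-1 * \sum_i sqnorm (a i - b i + n%:R^-1 *: \sum_j b j)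
  <= 2 * (n%:R^-1 * \sum_i sqnorm (a i)) + 2 * (n%:R^-1 * \sum_i sqnorm (b i)).
Proof.
rewrite mulrCA [2 * (_ * \sum_i sqnorm (b i))]mulrCA -mulrDr.
rewrite ler_wpM2l ?invr_ge0 ?ler0n //.
apply: le_trans (_ : \sum_i (2 * sqnorm (a i)
                             + 2 * sqnorm (b i - n%:R^-1 *: \sum_j b j)) <= _).
  apply: ler_sum => i _.
  rewrite -(sqnormN (b i - _)) opprB [a i - b i + _]addrAC -[a i + _ - b i]addrA.
  exact: sqnormD_le.
by rewrite big_split /= -!mulr_sumr lerD2l ler_wpM2l // sum_sqnorm_centered_le.
Qed.

End Variance.

Section TupleExpectation.
Variables (R : realType) (C : finType) (wt : C -> R).

Definition expect_tuple T (F : T.-tuple C -> R) : R :=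
  \sum_(w : T.-tuple C) (\prod_(t < T) wt (tnth w t)) * F w.

Fixpoint expect_seq m (H : seq C -> R) : R :=
  if m is m'.+1 then \sum_c wt c * expect_seq m' (fun s => H (c :: s)) else H [::].

Lemma expect_tupleD T (F G : T.-tuple C -> R) :
  expect_tuple (fun w => F w + G w) = expect_tuple F + expect_tuple G.
Proof. by rewrite -big_split; apply: eq_bigr => w _; rewrite mulrDr. Qed.

Lemma expect_tupleB T (F G : T.-tuple C -> R) :
  expect_tuple (fun w => F w - G w) = expect_tuple F - expect_tuple G.
Proof. by rewrite -sumrB; apply: eq_bigr => w _; rewrite mulrBr. Qed.

Lemma expect_tuple_sum T m (F : 'I_m -> T.-tuple C -> R) :
  expect_tuple (fun w => \sum_(i < m) F i w) = \sum_(i < m) expect_tuple (F i).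
Proof. by rewrite exchange_big; apply: eq_bigr => w _; rewrite mulr_sumr. Qed.

Lemma expect_tuple0 (F : 0.-tuple C -> R) : expect_tuple F = F [tuple].
Proof.
rewrite /expect_tuple (big_pred1 [tuple]) => [|w]; first by rewrite big_ord0 mul1r.
by rewrite /= (tuple0 w); exact/esym/eqxx.
Qed.

Lemma expect_tuple_cons T (F : T.+1.-tuple C -> R) :
  expect_tuple F = \sum_c wt c * expect_tuple (fun w : T.-tuple C => F [tuple of c :: w]).
Proof.
have tuple_consK : bijective (fun p : C * T.-tuple C => [tuple of p.1 :: p.2]).
  exists (fun w => (thead w, [tuple of behead w])) => [[c w]|w] /=.
    by congr pair; apply: val_inj.
  by rewrite -tuple_eta.
rewrite /expect_tuple (reindex _ (onW_bij _ tuple_consK)) /=.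
under [RHS]eq_bigr do rewrite mulr_sumr.
rewrite pair_big; apply: eq_bigr => -[c w] _ /=.
by rewrite big_ord_recl mulrA; congr (_ * _ * _); apply: eq_bigr => t _; rewrite tnthS.
Qed.

Hypothesis wt_ge0 : forall c, 0 <= wt c.
Hypothesis wt_sum1 : \sum_c wt c = 1.

Lemma expect_tuple_le T (F G : T.-tuple C -> R) :
  (forall w, F w <= G w) -> expect_tuple F <= expect_tuple G.
Proof. by move=> FG; apply: ler_sum => w _; rewrite ler_wpM2l ?prodr_ge0. Qed.

Lemma expect_seq_ge0 m (H : seq C -> R) : (forall s, 0 <= H s) -> 0 <= expect_seq m H.
Proof.
elim: m H => [|m IH] H H_ge0 //=.
by apply: sumr_ge0 => c _; rewrite mulr_ge0 ?IH.
Qed.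

Lemma expect_seq_rcons m (H : seq C -> R) :
  expect_seq m.+1 H = expect_seq m (fun s => \sum_c wt c * H (rcons s c)).
Proof.
elim: m H => [|m IH] H //.
transitivity (\sum_c wt c * expect_seq m.+1 (fun s => H (c :: s))) => //.
by under eq_bigr do rewrite IH.
Qed.

Lemma expect_tuple_take T m (H : seq C -> R) : (m <= T)%N ->
  expect_tuple (fun w : T.-tuple C => H (take m w)) = expect_seq m H.
Proof.
elim: T m H => [|T IH] [|m] H //= m_le; rewrite ?expect_tuple0 // expect_tuple_cons.
  under eq_bigr => c _ do rewrite (IH 0%N (fun=> H [::])) //.
  by rewrite -mulr_suml wt_sum1 mul1r.
by apply: eq_bigr => c _; rewrite (IH m (fun s => H (c :: s))).
Qed.

Variables (S : Type) (step : S -> C -> S) (s0 : S).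

Lemma expect_sum_le_lyapunov (a b V : S -> R) T :
  (forall s, 0 <= V s) ->
  (forall s, a s + \sum_c wt c * V (step s c) <= b s + V s) ->
  expect_tuple (fun w : T.-tuple C => \sum_(t < T) a (foldl step s0 (take t w)))
  <= expect_tuple (fun w : T.-tuple C => \sum_(t < T) b (foldl step s0 (take t w))) + V s0.
Proof.
move=> V_ge0 drift; set st := foldl step s0.
pose EV t := expect_seq t (fun s => V (st s)).
have drift_sum (w : T.-tuple C) : \sum_(t < T) a (st (take t w)) <=
    \sum_(t < T) b (st (take t w)) + \sum_(t < T)
      (V (st (take t w)) - \sum_c wt c * V (step (st (take t w)) c)).
  rewrite -big_split /=; apply: ler_sum => t _; have := drift (st (take t w)); lra.
apply: le_trans (expect_tuple_le drift_sum) _.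
rewrite expect_tupleD lerD2l expect_tuple_sum.
have EV_step (t : 'I_T) : expect_tuple (fun w : T.-tuple C =>
    V (st (take t w)) - \sum_c wt c * V (step (st (take t w)) c)) = EV t - EV t.+1.
  have t_le : (t <= T)%N by apply: ltnW.
  rewrite expect_tupleB (expect_tuple_take (fun s => V (st s)) t_le).
  rewrite (expect_tuple_take (fun s => \sum_c wt c * V (step (st s) c)) t_le).
  rewrite /EV expect_seq_rcons.
  congr (_ - expect_seq _ _); apply/funext => s.
  by apply: eq_bigr => c _; rewrite /st foldl_rcons.
rewrite (eq_bigr _ (fun t _ => EV_step t)).
rewrite -(big_mkord xpredT (fun t => EV t - EV t.+1)).
rewrite (telescope_sumr_eq (fun t => - EV t)) => [|//|t _]; last by rewrite opprK addrC.
have : 0 <= EV T by apply: expect_seq_ge0.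
by rewrite /EV /=; lra.
Qed.

End TupleExpectation.

Lemma sum_pair_bool (V : nmodType) (I : finType) (F : I * bool -> V) :
  \sum_c F c = \sum_i (F (i, true) + F (i, false)).
Proof.
transitivity (\sum_i \sum_(b : bool) F (i, b)).
  by rewrite pair_big; apply: eq_bigr => -[].
by apply: eq_bigr => i _; rewrite big_bool.
Qed.

Lemma sum_if_eq (V : zmodType) (I : finType) (i : I) (F G : I -> V) :
  \sum_j (if j == i then F j else G j) = \sum_j G j + (F i - G i).
Proof.
rewrite (bigD1 i) // [in RHS](bigD1 i) //= eqxx [RHS]addrC addrA subrK.
by congr (_ + _); apply: eq_bigr => j /negbTE ->.
Qed.

Section AdaLVR.
Variables (R : realType) (d n : nat).
Local Notation vec := 'rV[R]_d.
Variables (f : 'I_n -> vec -> R) (grad : 'I_n -> vec -> vec) (L : R) (xs : vec).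
Hypothesis n_gt0 : (0 < n)%N.
Hypothesis L_gt0 : 0 < L.
Hypothesis f_convex : forall i, convex_fun (f i).
Hypothesis f_grad : forall i x,
  differentiable (f i) x /\ forall h, 'd (f i) x h = dotp (grad i x) h.
Hypothesis grad_lip : forall i x y, enorm (grad i x - grad i y) <= L * enorm (x - y).
Hypothesis xs_min : forall y, favg f xs <= favg f y.
Local Notation p := (n%:R^-1 : R).

Lemma invn_ge0 : 0 <= p.
Proof. by rewrite invr_ge0 ler0n. Qed.

Lemma favg_smooth_upper y :
  favg f y <= favg f xs + dotp (gavg grad xs) (y - xs) + L / 2 * sqnorm (y - xs).
Proof.
have : \sum_i f i y <= \sum_i (f i xs + dotp (grad i xs) (y - xs) + L / 2 * sqnorm (y - xs)).
  by apply: ler_sum => i _; apply: smooth_upper.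
rewrite !big_split /= sumr_const card_ord -[_ *+ n]mulr_natl => /(ler_wpM2l invn_ge0).
by rewrite /favg /gavg dotpZl dotp_suml !mulrDr mulKf ?natr_neq0.
Qed.

Lemma sum_grad_min_eq0 : \sum_j grad j xs = 0.
Proof.
have /eqP := descent_min_grad_eq0 L_gt0 favg_smooth_upper xs_min.
by rewrite scaler_eq0 invr_eq0 (negbTE (natr_neq0 R n_gt0)) => /eqP.
Qed.

Definition grad_dev (z : 'I_n -> vec) : R :=
  p * \sum_j sqnorm (grad j (z j) - grad j xs).

Lemma grad_dev_ge0 z : 0 <= grad_dev z.
Proof. by rewrite mulr_ge0 ?invn_ge0 ?sumr_ge0 // => j _; apply: sqnorm_ge0. Qed.

Lemma grad_dev_le_gap y : grad_dev (fun=> y) <= 2 * L * (favg f y - favg f xs).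
Proof.
have : \sum_j sqnorm (grad j y - grad j xs)
       <= \sum_j 2 * L * (f j y - f j xs - dotp (grad j xs) (y - xs)).
  by apply: ler_sum => j _; apply: grad_cocoercive.
rewrite -mulr_sumr !sumrB -dotp_suml sum_grad_min_eq0 dotp0l subr0.
move=> /(ler_wpM2l invn_ge0).
by rewrite /grad_dev /favg -mulrBr mulrCA.
Qed.

Lemma mean_sqnorm_estimator_le (x : vec) (z : 'I_n -> vec) :
  p * \sum_i sqnorm (grad i x - grad i (z i) + p *: \sum_j grad j (z j))
  <= 2 * grad_dev (fun=> x) + 2 * grad_dev z.
Proof.
have centered (v : 'I_n -> vec) : \sum_j grad j (v j) = \sum_j (grad j (v j) - grad j xs).
  by rewrite sumrB sum_grad_min_eq0 subr0.
rewrite centered.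
have split i : grad i x - grad i (z i)
    = (grad i x - grad i xs) - (grad i (z i) - grad i xs).
  by rewrite opprB addrA subrK.
under eq_bigr => i _ do rewrite split.
exact: mean_sqnorm_control_variate_le.
Qed.

Definition anchor (k : estimator) (s : state R d n) : 'I_n -> vec :=
  match k with SAGA => st_tab s | LSVRG => fun=> st_snap s end.

Lemma anchor_init k (x1 : vec) : anchor k (init_state n x1) = fun=> x1.
Proof. by case: k. Qed.

Lemma weight_ge0 k (c : choiceT n k) : 0 <= weight p c.
Proof.
case: k c => [c|[i b]] /=; first exact: invn_ge0.
rewrite mulr_ge0 ?invn_ge0 //; case: b; first exact: invn_ge0.
by rewrite subr_ge0 invf_le1 ?ler1n ?ltr0n.
Qed.

Lemma sum_weight k : \sum_(c : choiceT n k) weight p c = 1.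
Proof.
case: k => /=; last first.
  rewrite sum_pair_bool /=.
  under eq_bigr do rewrite -mulrDr addrC subrK mulr1.
all: by rewrite sumr_const card_ord -(mulr_natl p) mulfV ?natr_neq0.
Qed.

Lemma cond_sqnorm_le k (s : state R d n) :
  cond_sqnorm grad k p s <= 2 * grad_dev (fun=> st_x s) + 2 * grad_dev (anchor k s).
Proof.
case: k; rewrite /cond_sqnorm /=; last first.
  rewrite sum_pair_bool /=.
  under eq_bigr do rewrite -mulrDl -mulrDr addrC subrK mulr1.
all: by rewrite -mulr_sumr; apply: mean_sqnorm_estimator_le.
Qed.

Lemma grad_dev_update (z : 'I_n -> vec) (x : vec) i :
  grad_dev (fun j => if j == i then x else z j)
  = grad_dev z + p * (sqnorm (grad i x - grad i xs) - sqnorm (grad i (z i) - grad i xs)).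
Proof.
rewrite /grad_dev -mulrDr; congr (_ * _).
under eq_bigr do rewrite (fun_if (fun v => sqnorm (grad _ v - grad _ xs))).
exact: (sum_if_eq i (fun j => sqnorm (grad j x - grad j xs))).
Qed.

Lemma expect_grad_dev_step k ada eta proj (s : state R d n) :
  \sum_(c : choiceT n k) weight p c * grad_dev (anchor k (step grad ada eta proj s c))
  = p * grad_dev (fun=> st_x s) + (1 - p) * grad_dev (anchor k s).
Proof.
case: k => /=.
  under eq_bigr do rewrite grad_dev_update.
  rewrite -mulr_sumr big_split /= sumr_const card_ord -mulr_sumr sumrB /grad_dev.
  by field; rewrite natr_neq0.
rewrite sum_pair_bool /= sumr_const card_ord.
by field; rewrite natr_neq0.
Qed.

Lemma lyapunov_drift k ada eta proj (s : state R d n) :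
  cond_sqnorm grad k p s
    + \sum_(c : choiceT n k)
        weight p c * (2 * n%:R * grad_dev (anchor k (step grad ada eta proj s c)))
  <= 8 * L * (favg f (st_x s) - favg f xs) + 2 * n%:R * grad_dev (anchor k s).
Proof.
under eq_bigr do rewrite mulrCA.
rewrite -mulr_sumr expect_grad_dev_step.
have := cond_sqnorm_le k s; have := grad_dev_le_gap (st_x s).
have -> : 2 * n%:R * (p * grad_dev (fun=> st_x s) + (1 - p) * grad_dev (anchor k s))
    = 2 * grad_dev (fun=> st_x s) + 2 * (n%:R - 1) * grad_dev (anchor k s).
  by field; rewrite natr_neq0.
lra.
Qed.

End AdaLVR.

Theorem proposition1 (R : realType) (d n : nat)
  (f : 'I_n -> 'rV[R]_d -> R) (grad : 'I_n -> 'rV[R]_d -> 'rV[R]_d) (L : R)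
  (X : set 'rV[R]_d) (xs x1 : 'rV[R]_d) (eta : R)
  (proj : 'rV[R]_d -> 'rV[R]_d -> 'rV[R]_d)
  (ada : adagrad_variant) (k : estimator) (T : nat) :
  (0 < n)%N -> 0 < L ->
  (forall i, convex_fun (f i)) ->
  (forall i x, differentiable (f i) x /\ forall h, 'd (f i) x h = dotp (grad i x) h) ->
  (forall i x y, enorm (grad i x - grad i y) <= L * enorm (x - y)) ->
  compact X -> convex_set X ->
  X xs -> (forall y, favg f xs <= favg f y) ->
  0 < eta -> is_proj_sel X proj -> (1 <= T)%N ->
  let p := n%:R^-1 in
  @Exp R n k p T (fun w : T.-tuple (choiceT n k) =>
      \sum_(t < T) cond_sqnorm grad k p (run grad ada eta proj x1 (take t w)))
  <= @Exp R n k p T (fun w : T.-tuple (choiceT n k) =>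
      8 * L * \sum_(t < T) (favg f (st_x (run grad ada eta proj x1 (take t w))) - favg f xs))
     + 4 * L * n%:R * (favg f x1 - favg f xs).
Proof.
move=> n_gt0 L_gt0 f_convex f_grad grad_lip _ _ _ xs_min _ _ _ /=.
have w_ge0 := @weight_ge0 R n n_gt0 k.
pose V s := 2 * n%:R * grad_dev grad xs (anchor k s).
have V_ge0 s : 0 <= V s by rewrite mulr_ge0 ?grad_dev_ge0 // mulr_ge0 ?ler0n.
have := expect_sum_le_lyapunov w_ge0 (sum_weight R n_gt0 k) (init_state n x1)
  (b := fun s => 8 * L * (favg f (st_x s) - favg f xs)) T V_ge0
  (lyapunov_drift n_gt0 L_gt0 f_convex f_grad grad_lip xs_min k ada eta proj).
move=> /le_trans; apply; apply: lerD.
  by apply: (expect_tuple_le w_ge0) => w; rewrite mulr_sumr.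
have := grad_dev_le_gap n_gt0 L_gt0 f_convex f_grad grad_lip xs_min x1.
by rewrite /V anchor_init => gap; have := ler0n R n; nra.
Qed.
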